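(* Let $m$ be a positive integer and let $A,B$ be finite multisets of elements of $\{1,\dots,m\}$. If $\sum A\ge m^2$ and $\sum B\ge m^2$, then the pair $(A,B)$ is reducible, i.e., there exist a nonempty sub-multiset $A'\subseteq A$ and a nonempty sub-multiset $B'\subseteq B$ with $\sum A'=\sum B'$.
   Context: For a multiset $A$, $\sum A$ denotes the sum of its elements (counted with multiplicity). A pair of multisets $(A,B)$ is called reducible if the sum of some nonempty sub-multiset of $A$ equals the sum of some nonempty sub-multiset of $B$, and irreducible otherwise. *)

From mathcomp Require Import all_boot.
Set Implicit Arguments. Unset Strict Implicit. Unset Printing Implicit Defensive.

(* Finite multisets of naturals are represented by sequences (order irrelevant). *)
Definition submset (A' A : seq nat) : Prop :=
  forall x : nat, count_mem x A' <= count_mem x A.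

Definition reducible (A B : seq nat) : Prop :=
  exists A' B' : seq nat,
    [/\ submset A' A, submset B' B, A' != [::], B' != [::] & sumn A' = sumn B'].

(* Write a_i and b_j for the prefix sums of A and B, and for i = 0, ..., m let
   j(i) be the least j with a_i <= b_j; it exists because
   a_i <= i m <= m^2 <= sum B.  Minimality of j(i) and b_j - b_(j-1) <= m give
   0 <= b_(j(i)) - a_i < m, so by pigeonhole two indices i1 < i2 share the
   same gap.  Then A[i1, i2) and B[j(i1), j(i2)) have the same sum, which is
   positive because every element is at least 1 and m <= size A. *)

From mathcomp Require Import all_boot.
From mathcomp Require Import zify.
Set Implicit Arguments. Unset Strict Implicit.

Lemma pigeonhole_nat (f : nat -> nat) (n : nat) :
  (forall i, i <= n -> f i < n) ->
  exists i k, [/\ i < k, k <= n & f i = f k].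
Proof.
move=> f_lt; have not_uniq : ~~ uniq (map f (iota 0 n.+1)).
  apply/negP => /uniq_leq_size le_size.
  have /le_size : {subset map f (iota 0 n.+1) <= iota 0 n}.
    by move=> y /mapP[i]; rewrite !mem_iota !add0n => le_in ->; exact: f_lt.
  by rewrite size_map !size_iota ltnn.
have [i [k [lt_ik]]] := uniqPn 0 not_uniq.
rewrite size_map size_iota => lt_kn.
rewrite !(nth_map 0) ?nth_iota ?size_iota ?(ltn_trans lt_ik) // !add0n => eq_f.
by exists i, k.
Qed.

Lemma sumn_le_size_mul (m : nat) (s : seq nat) :
  all (fun a => a <= m) s -> sumn s <= size s * m.
Proof. by elim: s => //= a s IHs /andP[le_am /IHs]; lia. Qed.

Lemma sumn_take_le_mul (m i : nat) (s : seq nat) :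
  all (fun a => a <= m) s -> sumn (take i s) <= i * m.
Proof.
move=> s_le; have take_le : all (fun a => a <= m) (take i s).
  by apply/allP => y /mem_take; apply: (allP s_le).
apply: leq_trans (sumn_le_size_mul take_le) _.
by rewrite leq_mul2r size_take_min geq_minl orbT.
Qed.

Lemma size_le_sumn (s : seq nat) : all (fun a => 0 < a) s -> size s <= sumn s.
Proof. by elim: s => //= a s IHs /andP[a_gt0 /IHs]; lia. Qed.

Lemma submset_drop_take (i k : nat) (s : seq nat) :
  submset (drop i (take k s)) s.
Proof.
move=> x; rewrite -{2}(cat_take_drop k s) -{2}(cat_take_drop i (take k s)).
by rewrite !count_cat; lia.
Qed.

Lemma sumn_take_split (i k : nat) (s : seq nat) : i <= k ->
  sumn (take k s) = sumn (take i s) + sumn (drop i (take k s)).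
Proof.
by move=> le_ik; rewrite -{1}(cat_take_drop i (take k s)) sumn_cat take_takel.
Qed.

Lemma sumn_take_ltn (i k : nat) (s : seq nat) :
  all (fun a => 0 < a) s -> i < k <= size s ->
  sumn (take i s) < sumn (take k s).
Proof.
move=> s_gt0 /andP[lt_ik le_ks]; rewrite (sumn_take_split s (ltnW lt_ik)).
have seg_gt0 : all (fun a => 0 < a) (drop i (take k s)).
  by apply/allP => y /mem_drop/mem_take; apply: (allP s_gt0).
have := size_le_sumn seg_gt0; rewrite size_drop size_takel //; lia.
Qed.

Lemma reducible_of_prefix_sums (A B : seq nat) (i1 i2 j1 j2 : nat) :
  i1 <= i2 -> j1 <= j2 ->
  sumn (take i1 A) < sumn (take i2 A) ->
  sumn (take i2 A) + sumn (take j1 B) = sumn (take j2 B) + sumn (take i1 A) ->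
  reducible A B.
Proof.
move=> le_i le_j; rewrite (sumn_take_split A le_i) (sumn_take_split B le_j).
set SA := drop i1 _; set SB := drop j1 _ => SA_gt0 eq_sum.
exists SA, SB; split; try exact: submset_drop_take.
- by apply: contraTneq SA_gt0 => ->; rewrite addn0 ltnn.
- by apply: contraTneq SA_gt0 => SB0; move: eq_sum; rewrite SB0 /=; lia.
- lia.
Qed.

(* Junk value [(size s).+1] when [sumn s < x]. *)
Definition reach (s : seq nat) (x : nat) : nat :=
  find (fun j => x <= sumn (take j s)) (iota 0 (size s).+1).

Section Reach.

Variables (s : seq nat) (x : nat).
Hypothesis x_le_sum : x <= sumn s.

Let has_reach : has (fun j => x <= sumn (take j s)) (iota 0 (size s).+1).
Proof.
by apply/hasP; exists (size s); [rewrite mem_iota add0n ltnSn | rewrite take_size].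
Qed.

Let reach_lt : reach s x < (size s).+1.
Proof. by rewrite -[X in _ < X](size_iota 0) -has_find. Qed.

Lemma reach_ge : x <= sumn (take (reach s x) s).
Proof. by have := nth_find 0 has_reach; rewrite nth_iota. Qed.

Lemma reach_le (m : nat) :
  all (fun a => a <= m) s -> sumn (take (reach s x) s) <= x + m.-1.
Proof.
move=> s_le; case E: (reach s x) => [|j]; first by rewrite take0.
have lt_js : j < size s by rewrite -ltnS -E reach_lt.
have lt_j : j < reach s x by rewrite E.
have := before_find 0 lt_j; rewrite nth_iota ?(ltn_trans lt_j reach_lt) //.
move/negbT; rewrite -ltnNge add0n (take_nth 0 lt_js) sumn_rcons.
have le_m : nth 0 s j <= m := allP s_le _ (mem_nth 0 lt_js).
lia.
Qed.

End Reach.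

Theorem lemma1 (m : nat) (A B : seq nat) :
  0 < m ->
  all (fun a => 1 <= a <= m) A ->
  all (fun b => 1 <= b <= m) B ->
  m ^ 2 <= sumn A ->
  m ^ 2 <= sumn B ->
  reducible A B.
Proof.
move=> m_gt0 A_bd B_bd; rewrite -mulnn => sumA sumB.
have A_gt0 : all (fun a => 0 < a) A by apply: sub_all A_bd => a /andP[].
have A_le : all (fun a => a <= m) A by apply: sub_all A_bd => a /andP[].
have B_le : all (fun b => b <= m) B by apply: sub_all B_bd => b /andP[].
have sizeA : m <= size A.
  by rewrite -(leq_pmul2r m_gt0) (leq_trans sumA (sumn_le_size_mul A_le)).
pose a i := sumn (take i A).
pose b j := sumn (take j B).
have a_le i : i <= m -> a i <= sumn B.
  by move=> le_im; have := sumn_take_le_mul i A_le; rewrite -/(a i); nia.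
pose gap i := b (reach B (a i)) - a i.
have [i1 [i2 [lt_i le_i2 eq_gap]]] : exists i1 i2,
    [/\ i1 < i2, i2 <= m & gap i1 = gap i2].
  apply: pigeonhole_nat => i /a_le le_aB.
  by have := reach_le le_aB B_le; rewrite /gap -/(b _); lia.
have lt_a : a i1 < a i2 by apply: sumn_take_ltn; rewrite // lt_i (leq_trans le_i2).
have ge1 := reach_ge (a_le _ (leq_trans (ltnW lt_i) le_i2)).
have ge2 := reach_ge (a_le _ le_i2).
have le_j : reach B (a i1) <= reach B (a i2).
  rewrite leqNgt; apply/negP => /ltnW/(sumn_take_split B).
  by move: eq_gap ge1 ge2 lt_a; rewrite /gap /b /a; lia.
apply: (reducible_of_prefix_sums (ltnW lt_i) le_j lt_a).
by move: eq_gap ge1 ge2; rewrite /gap /b /a; lia.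
Qed.
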